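(* (i) $\mathrm{Box}(\Sigma_+)\setminus\mathrm{Box}(\Sigma^{es}_+)=\mathrm{Box}(\Sigma_-)\setminus\mathrm{Box}(\Sigma^{es}_-)$; moreover, for any $v$ in these sets, written $v=\sum_jq_jv_j$ with $0\le q_j<1$ and $q_j=0$ if $\mathbb R_{\ge0}v_j\not\prec\sigma(v)$, the minimal cone $\sigma(v)$ containing $v$ is the same in $\Sigma_+$ and $\Sigma_-$, and the associated $n$-tuples of roots of unity $(y^v_1,\dots,y^v_n)$, $y^v_j=e^{2\pi iq_j}$, are the same. (ii) For any $v\in\mathrm{Box}(\Sigma^{es}_+)$ with associated $y^v$ (computed in $\Sigma_+$) and any $t\in\mathcal I(y^v)$, the $n$-tuple $(y^v_1t^{h_1},\dots,y^v_nt^{h_n})$ equals $y^{v'}$ (computed in $\Sigma_-$) for some $v'\in\mathrm{Box}(\Sigma^{es}_-)$, i.e. determines the maximal ideal of $K_0(\mathbb P_{\Sigma_-},\mathbb C)$ corresponding to an element of $\mathrm{Box}(\Sigma^{es}_-)$; moreover every $n$-tuple $y^{v'}$ with $v'\in\mathrm{Box}(\Sigma^{es}_-)$ arises in this way for suitable $v\in\mathrm{Box}(\Sigma^{es}_+)$ and $t\in\mathcal I(y^v)$.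
   Context: $N\cong\mathbb Z^d$ lattice, $\mathcal A=\{v_1,\dots,v_n\}\subset N$ generating $N$ with a homomorphism $\mathrm h:N\to\mathbb Z$, $\mathrm h(v_j)=1$; $\mathbb L=\{l\in\mathbb Z^n:\sum l_jv_j=0\}$; $\Delta=\mathrm{Conv}(\mathcal A)$. $\Sigma_+,\Sigma_-$ are the simplicial fans supported on $\mathbb R_{\ge0}\Delta$ induced by two regular triangulations of $\Delta$ with vertices in $\mathcal A$ that are joined by an edge of the secondary polytope. There is a circuit $I\subset\mathcal A$ with a primitive relation $h=(h_1,\dots,h_n)\in\mathbb L$ ($\sum h_jv_j=0$, $I=\{v_j:h_j\ne0\}$), $I_\pm=\{v_j:\pm h_j>0\}$, such that, calling $\mathcal F\subset\mathcal A\setminus I$ separating if $\mathcal F\cup(I\setminus\{v\})$ generates a maximal cone of $\Sigma_\pm$ for every $v\in I_\pm$, $\Sigma_-$ is obtained from $\Sigma_+$ by replacing all maximal cones generated by $\mathcal F\cup(I\setminus\{v\})$, $v\in I_+$, with the cones generated by $\mathcal F\cup(I\setminus\{v\})$, $v\in I_-$, for all separating $\mathcal F$. Maximal cones of $\Sigma_\pm$ of the form $\mathcal F\cup(I\setminus\{v\})$ ($\mathcal F$ separating, $v\in I_\pm$) are called essential; $\Sigma^{es}_\pm(d)$ is the set of them. For a fan $\Sigma$, $\mathrm{Box}(\Sigma)$ is the set of $v\in N$ with $v=\sum q_jv_j$, $0\le q_j<1$, $q_j=0$ unless $v_j$ spans a ray of a fixed maximal cone; $\sigma(v)$ is the smallest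 cone containing $v$; $y^v_j=e^{2\pi iq_j}$. $\mathrm{Box}(\Sigma^{es}_\pm)$ is the set of $v\in\mathrm{Box}(\Sigma_\pm)$ whose $\sigma(v)$ is a face of some essential maximal cone. For $r\in(\mathbb C^* )^n$, $\mathcal I(r)$ is the set of $t\in\mathbb C^*$ such that $r_jt^{h_j}=1$ for some $j$ with $v_j\in I_-$. (The maximal ideals of $K_0(\mathbb P_{\Sigma_-},\mathbb C)=\mathbb C[R_j^{\pm1}]/(\text{relations})$ are $(R_j-y^{v'}_j)_j$, $v'\in\mathrm{Box}(\Sigma_-)$.) *)

From mathcomp Require Import all_boot all_order all_algebra.
From mathcomp Require Import all_classical all_reals all_analysis.
From mathcomp.real_closed Require Export complex.

Set Implicit Arguments.
Unset Strict Implicit.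
Unset Printing Implicit Defensive.

Import GRing.Theory Num.Theory.
Local Open Scope ring_scope.

(* N = Z^d, points of N are functions 'I_d -> int, points of
   N_R = R^d are functions 'I_d -> R.  The configuration A = {v_1,...,v_n} is
   v : 'I_n -> 'I_d -> int.  Cones of the (simplicial) fans are encoded by the
   set of indices j of the v_j spanning their rays; a triangulation T is the
   set of its maximal simplices (= maximal cones of the induced fan). *)

Section Defs.
Variables (R : realType) (d n : nat) (v : 'I_n -> 'I_d -> int).

Definition lincomb (c : 'I_n -> R) (x : 'I_d -> R) : Prop :=
  forall i : 'I_d, x i = \sum_(j < n) c j * (v j i)%:~R.

Definition in_cone (F : {set 'I_n}) (x : 'I_d -> R) : Prop :=
  exists c : 'I_n -> R, (forall j, 0 <= c j) /\ (forall j, j \notin F -> c j = 0)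
                        /\ lincomb c x.

Definition lin_indep (S : {set 'I_n}) : Prop :=
  forall c : 'I_n -> R, (forall j, j \notin S -> c j = 0) ->
    lincomb c (fun _ => 0) -> forall j, c j = 0.

(* T is a triangulation of Delta = Conv(A) with vertices in A, described through
   the induced simplicial fan supported on R_{>=0} Delta: every simplex has d
   linearly independent vertices (as A lies in the hyperplane h = 1, this is
   affine independence of full dimension), the cones cover R_{>=0} Delta and
   two cones meet along the cone over the common face. *)
Definition triangulation (T : {set {set 'I_n}}) : Prop :=
  [/\ forall S, S \in T -> #|S| = d /\ lin_indep S,
      forall x, in_cone [set: 'I_n] x -> exists2 S, S \in T & in_cone S x &
      forall S S' x, S \in T -> S' \in T -> in_cone S x -> in_cone S' x ->
        in_cone (S :&: S') x].

Definition lform (psi : 'I_d -> R) (j : 'I_n) : R :=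
  \sum_(i < d) psi i * (v j i)%:~R.

(* regular (coherent) triangulation: induced by a height function omega, each
   maximal simplex being a lower facet of the lifted configuration, all points
   of A not in the simplex lying strictly above it. *)
Definition regular_triangulation (T : {set {set 'I_n}}) : Prop :=
  triangulation T /\
  exists omega : 'I_n -> R, forall S, S \in T -> exists psi : 'I_d -> R,
    (forall j, j \in S -> lform psi j = omega j) /\
    (forall j, j \notin S -> lform psi j < omega j).

Definition simplex_mx (S : {set 'I_n}) : 'M[R]_d :=
  \matrix_(i < d, k < d)
    match nth None [seq Some j | j <- enum S] k with
    | Some j => (v j i)%:~R
    | None => 0
    end.

Definition svol (S : {set 'I_n}) : R := `|\det (simplex_mx S)|.

Definition gkz (T : {set {set 'I_n}}) (j : 'I_n) : R :=
  \sum_(S in T | j \in S) svol S.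

(* T1 and T2 are joined by an edge of the secondary polytope
   Conv{ gkz T | T regular triangulation }: they are distinct vertices and some
   linear functional w attains its minimum on the secondary polytope exactly
   on the segment [gkz T1, gkz T2]. *)
Definition secondary_edge (T1 T2 : {set {set 'I_n}}) : Prop :=
  regular_triangulation T1 /\ regular_triangulation T2 /\ gkz T1 <> gkz T2 /\
  exists w : 'I_n -> R,
    \sum_(j < n) w j * gkz T1 j = \sum_(j < n) w j * gkz T2 j /\
    forall T, regular_triangulation T ->
      \sum_(j < n) w j * gkz T1 j <= \sum_(j < n) w j * gkz T j /\
      (\sum_(j < n) w j * gkz T j = \sum_(j < n) w j * gkz T1 j ->
         gkz T = gkz T1 \/ gkz T = gkz T2).

Definition relation (l : 'I_n -> int) : Prop :=
  forall i : 'I_d, \sum_(j < n) l j * v j i = 0.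

Definition supp (h : 'I_n -> int) : {set 'I_n} := [set j | h j != 0].
Definition suppP (h : 'I_n -> int) : {set 'I_n} := [set j | 0 < h j].
Definition suppN (h : 'I_n -> int) : {set 'I_n} := [set j | h j < 0].

Definition primitive_circuit_relation (h : 'I_n -> int) : Prop :=
  [/\ relation h, supp h != finset.set0,
      (forall J : {set 'I_n}, J \proper supp h -> lin_indep J) &
      (forall (k : int) (l : 'I_n -> int), relation l ->
          (forall j, h j = k * l j) -> k = 1 \/ k = -1)].

Definition separating (T : {set {set 'I_n}}) (I Is : {set 'I_n})
  (F : {set 'I_n}) : Prop :=
  [disjoint F & I] /\ forall j, j \in Is -> F :|: (I :\ j) \in T.

Definition essential (T : {set {set 'I_n}}) (I Is : {set 'I_n})
  (E : {set 'I_n}) : Prop :=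
  exists F j, [/\ separating T I Is F, j \in Is & E = F :|: (I :\ j)].

Definition circuit_flip (Tp Tm : {set {set 'I_n}}) (h : 'I_n -> int) : Prop :=
  forall S, S \in Tm <->
    (S \in Tp /\ ~ essential Tp (supp h) (suppP h) S) \/
    (exists F j, [/\ separating Tp (supp h) (suppP h) F, j \in suppN h
                   & S = F :|: (supp h :\ j)]).

Definition fan_cone (T : {set {set 'I_n}}) (F : {set 'I_n}) : Prop :=
  exists2 S, S \in T & F \subset S.

Definition min_cone (T : {set {set 'I_n}}) (x : 'I_d -> int) (F : {set 'I_n}) :
  Prop :=
  [/\ fan_cone T F, in_cone F (fun i => (x i)%:~R) &
      forall G, fan_cone T G -> in_cone G (fun i => (x i)%:~R) -> F \subset G].

Definition box (T : {set {set 'I_n}}) (x : 'I_d -> int) : Prop :=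
  exists2 S, S \in T & exists q : 'I_n -> R,
    [/\ forall j, 0 <= q j < 1, forall j, j \notin S -> q j = 0 &
        lincomb q (fun i => (x i)%:~R)].

Definition box_es (T : {set {set 'I_n}}) (I Is : {set 'I_n}) (x : 'I_d -> int) :
  Prop :=
  box T x /\ exists F, min_cone T x F /\
    exists E, essential T I Is E /\ F \subset E.

Definition box_rep (T : {set {set 'I_n}}) (x : 'I_d -> int) (q : 'I_n -> R) :
  Prop :=
  exists F, [/\ min_cone T x F, forall j, 0 <= q j < 1,
              forall j, j \notin F -> q j = 0 & lincomb q (fun i => (x i)%:~R)].

End Defs.

Local Open Scope complex_scope.

Definition yvec (R : realType) (n : nat) (q : 'I_n -> R) (j : 'I_n) : R[i] :=
  cos (2 * pi * q j) +i* sin (2 * pi * q j).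

Definition calI (R : realType) (n : nat) (h : 'I_n -> int) (r : 'I_n -> R[i])
  (t : R[i]) : Prop :=
  t != 0 /\ exists2 j, j \in suppN h & r j * t ^ h j = 1.

(* Every non-essential maximal cone lies in both fans, while no maximal cone of
   Sigma_+ contains all of I_+: otherwise the positive and negative parts of h
   would be two conical coordinate vectors of one point in two cones of Sigma_+,
   which a triangulation forbids.  Hence separating sets for (Sigma_+, I_+) and
   (Sigma_-, I_-) coincide and Sigma_+ is the flip of Sigma_- along -h, so one
   direction of (i) suffices.  A non-essential box element has its coordinates in
   a non-essential maximal cone, common to both fans, which fixes sigma(v) and y^v.
   For an essential one, multiplying y^v by t^h with t = exp(2 pi i s) moves the
   coordinates q to the fractional parts of q + s h; t in I(y^v) kills a
   coordinate indexed by I_-, so the new point lies in an essential cone of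
   Sigma_-, and conversely s = q'_k / h_k with k in I_+ kills the k-th coordinate
   and lands in an essential cone of Sigma_+. *)

From mathcomp Require Import all_boot all_order all_algebra.
From mathcomp Require Import all_classical all_reals all_analysis.
From mathcomp.real_closed Require Import complex.
From mathcomp Require Import ring lra.
Import Order.TTheory GRing.Theory Num.Theory.

Set Implicit Arguments.
Unset Strict Implicit.
Unset Printing Implicit Defensive.

Local Open Scope ring_scope.

Section UnitCircle.
Variable R : realType.
Local Open Scope complex_scope.

Definition cis (a : R) : R[i] := cos (2 * pi * a) +i* sin (2 * pi * a).

Lemma yvecE n (q : 'I_n -> R) j : yvec q j = cis (q j).
Proof. by []. Qed.

Lemma cisD a b : cis (a + b) = cis a * cis b.
Proof. by rewrite /cis !mulrDr cosD sinD /=; congr (_ +i* _); ring. Qed.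

Lemma cis0 : cis 0 = 1.
Proof. by rewrite /cis mulr0 cos0 sin0. Qed.

Lemma cisNK a : cis (- a) * cis a = 1.
Proof. by rewrite -cisD addNr cis0. Qed.

Lemma cis_neq0 a : cis a != 0.
Proof. by apply: contra_eq_neq (cisNK a) => ->; rewrite mulr0 eq_sym oner_neq0. Qed.

Lemma cisN a : cis (- a) = (cis a)^-1.
Proof. by apply: (mulIf (cis_neq0 a)); rewrite cisNK mulVf ?cis_neq0. Qed.

Lemma cis_nat (k : nat) : cis k%:R = 1.
Proof.
rewrite /cis.
have -> : 2 * pi * k%:R = 0 + pi *+ 2 *+ k :> R.
  by rewrite add0r -mulrnA -[RHS]mulr_natr natrM; ring.
by rewrite (periodicn (@cosD2pi R)) (periodicn (@sinD2pi R)) cos0 sin0.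
Qed.

Lemma cis_int (k : int) : cis k%:~R = 1.
Proof.
case: k => k; first exact: cis_nat.
by rewrite NegzE intrN; have := cisNK k.+1%:R; rewrite cis_nat mulr1.
Qed.

Lemma cisX a (m : int) : cis a ^ m = cis (a * m%:~R).
Proof.
have cisXn (k : nat) : cis a ^+ k = cis (a * k%:R).
  elim: k => [|k IHk]; first by rewrite mulr0 cis0.
  by rewrite exprSr IHk -cisD -[k.+1]addn1 natrD mulrDr mulr1.
case: m => k; first exact: cisXn.
by rewrite NegzE -exprnN cisXn intrN mulrN cisN.
Qed.

Lemma norm_cis a : `|cis a| = 1.
Proof. by rewrite normc_def /= cos2Dsin2 sqrtr1. Qed.

(* cis a = 1 forces sin (pi a) = 0, impossible for 0 < a < 1. *)
Lemma cis_eq1 a : 0 <= a < 1 -> cis a = 1 -> a = 0.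
Proof.
case/andP=> a_ge0 a_lt1 [cos1 _].
have sin0 : sin (pi * a) = 0.
  have : cos (pi * a + pi * a) = 1 by rewrite -cos1; congr cos; ring.
  rewrite cosD => cos2.
  have := cos2Dsin2 (pi * a); rewrite !expr2 => sc.
  by apply/eqP; rewrite -sqrf_eq0 expr2; apply/eqP; lra.
case: (ltrgt0P a) a_ge0 => // a_gt0 _.
have : 0 < sin (pi * a).
  apply: sin_gt0_pi; rewrite mulr_gt0 ?pi_gt0 //=.
  by rewrite -[ltRHS]mulr1 ltr_pM2l // pi_gt0.
by rewrite sin0 ltxx.
Qed.

Lemma cis_surj (t : R[i]) : `|t| = 1 -> exists a, t = cis a.
Proof.
case: t => a b; rewrite normc_def /= => -[] sqrt1.
have ab1 : a ^+ 2 + b ^+ 2 = 1.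
  by rewrite -[LHS]sqr_sqrtr ?sqrt1 ?expr1n // addr_ge0 // sqr_ge0.
have a_itv : -1 <= a <= 1.
  have : a ^+ 2 <= 1 by rewrite -ab1 lerDl sqr_ge0.
  by rewrite expr2 => a2; apply/andP; split; nra.
have pi2_gt0 : 0 < 2 * pi :> R by rewrite mulr_gt0 // pi_gt0.
have sin_acos_a : sin (acos a) = `|b|.
  by rewrite sin_acos // -ab1 addrC addKr sqrtr_sqr.
case: (lerP 0 b) => b_sign.
  exists (acos a / (2 * pi)); rewrite /cis mulrC mulfVK ?gt_eqF //.
  by rewrite acosK ?in_itv // sin_acos_a ger0_norm.
exists (- (acos a / (2 * pi))); rewrite /cis mulrN mulrC mulfVK ?gt_eqF //.
by rewrite cosN sinN acosK ?in_itv // sin_acos_a ltr0_norm ?opprK.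
Qed.

Lemma norm_eq1_cisXz a (t : R[i]) (m : int) : m != 0 -> cis a * t ^ m = 1 -> `|t| = 1.
Proof.
move=> m_neq0 /(congr1 Num.norm); rewrite normrM norm_cis mul1r normr1.
case: m m_neq0 => k k_neq0 norm1; apply/eqP.
  have : `|t| ^+ k == 1 by rewrite -normrX; apply/eqP; exact: norm1.
  by rewrite pexpr_eq1 // lt0n; case: k k_neq0 {norm1}.
move: norm1; rewrite NegzE -exprnN normfV normrX => /eqP.
by rewrite invr_eq1 pexpr_eq1.
Qed.

Definition fracr (r : R) : R := r - (Num.floor r)%:~R.

Lemma fracr_itv r : 0 <= fracr r < 1.
Proof. by have := floor_itv r; rewrite /fracr intrD; lra. Qed.

Lemma fracr0 : fracr 0 = 0.
Proof. by rewrite /fracr floor0 subr0. Qed.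

Lemma cis_fracr r : cis (fracr r) = cis r.
Proof. by rewrite /fracr -intrN cisD cis_int mulr1. Qed.

Lemma cis_fracr_shift a s (m : int) : cis (fracr (a + s * m%:~R)) = cis a * cis s ^ m.
Proof. by rewrite cis_fracr cisD cisX. Qed.

End UnitCircle.

Section Cones.
Variables (R : realType) (d n : nat) (v : 'I_n -> 'I_d -> int).
Implicit Types (T : {set {set 'I_n}}) (S F G E : {set 'I_n}) (c q : 'I_n -> R).

Definition csupp c : {set 'I_n} := [set j | c j != 0].

Lemma csupp_subset S c : (forall j, j \notin S -> c j = 0) -> csupp c \subset S.
Proof. by move=> cS; apply/fintype.subsetP => j; rewrite inE; apply: contraR => /cS ->. Qed.

Lemma relation_lincomb (l : 'I_n -> int) :
  relation v l -> lincomb v (fun j => (l j)%:~R : R) (fun _ => 0).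
Proof.
move=> rel i /=; rewrite -[LHS](mulr0z (1 : R)) -(rel i) rmorph_sum /=.
by apply: eq_bigr => j _; rewrite intrM.
Qed.

Lemma lincombB c1 c2 y1 y2 : lincomb v c1 y1 -> lincomb v c2 y2 ->
  lincomb v (fun j => c1 j - c2 j) (fun i => y1 i - y2 i).
Proof. by move=> l1 l2 i; rewrite l1 l2 -sumrB; apply: eq_bigr => j _; rewrite mulrBl. Qed.

Lemma lin_indep_lincomb_eq S c1 c2 y : lin_indep R v S ->
  (forall j, j \notin S -> c1 j = 0) -> (forall j, j \notin S -> c2 j = 0) ->
  lincomb v c1 y -> lincomb v c2 y -> c1 =1 c2.
Proof.
move=> indS c1S c2S l1 l2 j; apply/eqP; rewrite -subr_eq0; apply/eqP.
apply: (indS (fun j => c1 j - c2 j)); first by move=> k kS; rewrite c1S // c2S // subr0.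
by move=> i; rewrite -(lincombB l1 l2 i) subrr.
Qed.

(* Two maximal cones of a triangulation meet in a common face, on which the
   coordinates are unique. *)
Lemma triangulation_coef_eq T S S' c c' y : triangulation R v T ->
  S \in T -> S' \in T ->
  (forall j, 0 <= c j) -> (forall j, j \notin S -> c j = 0) -> lincomb v c y ->
  (forall j, 0 <= c' j) -> (forall j, j \notin S' -> c' j = 0) -> lincomb v c' y ->
  c =1 c'.
Proof.
move=> [simplices _ meet] ST S'T c_ge0 cS cy c'_ge0 c'S' c'y.
have [c'' [_ [c''SS' c''y]]] := meet _ _ _ ST S'T
  (ex_intro _ c (conj c_ge0 (conj cS cy))) (ex_intro _ c' (conj c'_ge0 (conj c'S' c'y))).
have c''_off (X : {set 'I_n}) : S :&: S' \subset X -> forall j, j \notin X -> c'' j = 0.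
  by move=> sub j jX; apply: c''SS'; exact: contra (fintype.subsetP sub j) jX.
move=> j.
rewrite (lin_indep_lincomb_eq (simplices _ ST).2 cS (c''_off _ (subsetIl _ _)) cy c''y).
by rewrite (lin_indep_lincomb_eq (simplices _ S'T).2 c'S' (c''_off _ (subsetIr _ _)) c'y c''y).
Qed.

(* Splitting c into its positive and negative parts gives two conical
   coordinate vectors of one point, which must agree. *)
Lemma triangulation_relation_eq0 T S S' c : triangulation R v T ->
  S \in T -> S' \in T -> lincomb v c (fun _ => 0) ->
  (forall j, 0 < c j -> j \in S) -> (forall j, c j < 0 -> j \in S') ->
  forall j, c j = 0.
Proof.
move=> triT ST S'T c_rel c_posS c_negS'.
pose cp j := if 0 < c j then c j else 0; pose cn j := if c j < 0 then - c j else 0.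
have cpn j : cp j - cn j = c j by rewrite /cp /cn; case: (ltrgt0P (c j)) => cj; lra.
have cp_ge0 j : 0 <= cp j by rewrite /cp; case: ifP => // /ltW.
have cn_ge0 j : 0 <= cn j by rewrite /cn; case: ifP => // /ltW; rewrite oppr_ge0.
have cpS j : j \notin S -> cp j = 0.
  by move=> jS; rewrite /cp; case: ifP => // /c_posS; rewrite (negbTE jS).
have cnS' j : j \notin S' -> cn j = 0.
  by move=> jS'; rewrite /cn; case: ifP => // /c_negS'; rewrite (negbTE jS').
pose y i := \sum_(j < n) cp j * (v j i)%:~R.
have cny : lincomb v cn y.
  move=> i; apply/eqP; rewrite -subr_eq0 /y -sumrB; apply/eqP.
  by rewrite [RHS](c_rel i); apply: eq_bigr => j _; rewrite -mulrBl cpn.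
move=> j; rewrite -cpn.
by rewrite (triangulation_coef_eq triT ST S'T cp_ge0 cpS (fun=> erefl) cn_ge0 cnS' cny) subrr.
Qed.

Lemma min_cone_uniq T x F1 F2 :
  min_cone R v T x F1 -> min_cone R v T x F2 -> F1 = F2.
Proof. by move=> [c1 i1 m1] [c2 i2 m2]; apply/eqP; rewrite finset.eqEsubset m1 // m2. Qed.

Lemma min_cone_csupp T S x c : triangulation R v T -> S \in T ->
  (forall j, 0 <= c j) -> (forall j, j \notin S -> c j = 0) ->
  lincomb v c (fun i => (x i)%:~R) -> min_cone R v T x (csupp c).
Proof.
move=> triT ST c_ge0 cS cx; split.
- by exists S => //; exact: csupp_subset.
- by exists c; split=> //; split=> // j; rewrite inE negbK => /eqP.
- move=> G [S' S'T GS'] [c' [c'_ge0 [c'G c'x]]].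
  have c'S' j : j \notin S' -> c' j = 0.
    by move=> jS'; apply: c'G; exact: contra (fintype.subsetP GS' j) jS'.
  apply/fintype.subsetP => j.
  rewrite inE (triangulation_coef_eq triT ST S'T c_ge0 cS cx c'_ge0 c'S' c'x).
  by apply: contraR => /c'G ->.
Qed.

Definition box_coeffs S x q : Prop :=
  [/\ forall j, 0 <= q j < 1, forall j, j \notin S -> q j = 0 &
      lincomb v q (fun i => (x i)%:~R)].

Lemma box_coeffs_min_cone T S x q : triangulation R v T -> S \in T ->
  box_coeffs S x q -> min_cone R v T x (csupp q).
Proof.
move=> triT ST [q01 qS qx]; apply: min_cone_csupp triT ST _ qS qx => j.
by case/andP: (q01 j).
Qed.

Lemma box_coeffs_rep T S x q : triangulation R v T -> S \in T ->
  box_coeffs S x q -> box_rep v T x q.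
Proof.
move=> triT ST bq; have [q01 _ qx] := bq; exists (csupp q); split => //.
  exact: box_coeffs_min_cone bq.
by move=> j; rewrite inE negbK => /eqP.
Qed.

Lemma box_rep_eq T S x q q' : triangulation R v T -> S \in T ->
  box_coeffs S x q -> box_rep v T x q' -> q' =1 q.
Proof.
move=> triT ST bq [F [minF _ q'F q'x]]; have [_ qS qx] := bq.
rewrite (min_cone_uniq minF (box_coeffs_min_cone triT ST bq)) in q'F.
have q'S j : j \notin S -> q' j = 0.
  by move=> jS; apply: q'F; exact: contra (fintype.subsetP (csupp_subset qS) j) jS.
case: triT => simplices _ _.
exact: lin_indep_lincomb_eq (simplices _ ST).2 q'S qS q'x qx.
Qed.

Lemma box_es_coeffsP T I Is S x q : triangulation R v T -> S \in T ->
  box_coeffs S x q ->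
  box_es R v T I Is x <-> exists2 E, essential T I Is E & csupp q \subset E.
Proof.
move=> triT ST bq; have minq := box_coeffs_min_cone triT ST bq; split.
  by move=> [_ [F [minF [E [essE FE]]]]]; exists E; rewrite // (min_cone_uniq minq minF).
move=> [E essE qE]; split; first by exists S => //; exists q.
by exists (csupp q); split => //; exists E.
Qed.

Lemma box_es_rep_vanish T I Is x q :
  box_es R v T I Is x -> box_rep v T x q ->
  exists F j, [/\ separating T I Is F, j \in Is &
                  forall i, i \notin F :|: (I :\ j) -> q i = 0].
Proof.
move=> [_ [G [minG [E [[F [j [sepF jIs ->]]] GE]]]]] [G' [minG' _ qG' _]].
exists F, j; split => // i iE; apply: qG'; rewrite (min_cone_uniq minG' minG).
exact: contra (fintype.subsetP GE i) iE.
Qed.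

Lemma box_es_of_coeffs T I Is F j x q : triangulation R v T ->
  separating T I Is F -> j \in Is -> box_coeffs (F :|: (I :\ j)) x q ->
  box_es R v T I Is x /\ box_rep v T x q.
Proof.
move=> triT sepF jIs bq; have ET := sepF.2 j jIs.
split; last exact: box_coeffs_rep triT ET bq.
apply/(box_es_coeffsP _ _ triT ET bq); exists (F :|: (I :\ j)); first by exists F, j.
by case: bq => _ qS _; exact: csupp_subset qS.
Qed.

Lemma lincomb_fracr_shift (l : 'I_n -> int) s x q : relation v l ->
  lincomb v q (fun i => (x i)%:~R) ->
  exists x' : 'I_d -> int,
    lincomb v (fun j => fracr (q j + s * (l j)%:~R)) (fun i => (x' i)%:~R).
Proof.
move=> rel qx; pose r j := q j + s * (l j)%:~R.
exists (fun i => x i - \sum_(j < n) Num.floor (r j) * v j i) => i.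
rewrite intrB rmorph_sum /= (qx i).
rewrite [RHS](eq_bigr (fun j => q j * (v j i)%:~R + s * ((l j)%:~R * (v j i)%:~R)
   - (Num.floor (r j))%:~R * (v j i)%:~R)); last by move=> j _; rewrite /fracr /r; ring.
rewrite sumrB big_split /= -mulr_sumr -(relation_lincomb rel i) mulr0 addr0.
by congr (_ - _); apply: eq_bigr => j _; rewrite intrM.
Qed.

End Cones.

Lemma fracr_shift_vanish (R : realType) n (q : 'I_n -> R) (l : 'I_n -> int) s
    (F : {set 'I_n}) j k :
  (forall i, i \notin F :|: (supp l :\ k) -> q i = 0) ->
  fracr (q j + s * (l j)%:~R) = 0 ->
  forall i, i \notin F :|: (supp l :\ j) -> fracr (q i + s * (l i)%:~R) = 0.
Proof.
move=> qF rj i; rewrite !inE negb_or negb_and negbK.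
move=> /andP[iF /orP[/eqP -> // | /negPn/eqP li0]].
have qi : q i = 0 by apply: qF; rewrite !inE li0 eqxx andbF orbF.
by rewrite qi li0 mulr0z mulr0 addr0 fracr0.
Qed.

Lemma setUD1_inj (T : finType) (F F' I : {set T}) a b :
  [disjoint F & I] -> [disjoint F' & I] -> F :|: (I :\ a) = F' :|: (I :\ b) -> F = F'.
Proof.
move=> dFI dF'I FF'; apply/setP => x.
have [xI|xNI] := boolP (x \in I); first by rewrite (disjointFl dFI xI) (disjointFl dF'I xI).
by have /setP/(_ x) := FF'; rewrite !inE (negbTE xNI) !andbF !orbF.
Qed.

Lemma notin_setUD1 (T : finType) (F I : {set T}) k :
  [disjoint F & I] -> k \in I -> k \notin F :|: (I :\ k).
Proof. by move=> dFI kI; rewrite !inE eqxx /= orbF (disjointFl dFI kI). Qed.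

Section Signs.
Variables (n : nat) (l : 'I_n -> int).

Lemma supp_opp : supp (fun j => - l j) = supp l.
Proof. by apply/setP => j; rewrite !inE oppr_eq0. Qed.

Lemma suppP_opp : suppP (fun j => - l j) = suppN l.
Proof. by apply/setP => j; rewrite !inE oppr_gt0. Qed.

Lemma suppN_opp : suppN (fun j => - l j) = suppP l.
Proof. by apply/setP => j; rewrite !inE oppr_lt0. Qed.

Lemma relation_opp d (v : 'I_n -> 'I_d -> int) :
  relation v l -> relation v (fun j => - l j).
Proof. by move=> rel i; under eq_bigr do rewrite mulNr; rewrite sumrN rel oppr0. Qed.

Lemma suppP_subsetUD1 (F : {set 'I_n}) j :
  j \in suppN l -> suppP l \subset F :|: (supp l :\ j).
Proof.
rewrite inE => lj; apply/fintype.subsetP => i; rewrite !inE => li.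
rewrite (gt_eqF li) andbT orbC; apply/orP; left.
by apply: contraTneq li => ->; rewrite -leNgt ltW.
Qed.

End Signs.

Lemma suppN_subsetUD1 n (l : 'I_n -> int) (F : {set 'I_n}) k :
  k \in suppP l -> suppN l \subset F :|: (supp l :\ k).
Proof.
by move=> kP; rewrite -suppP_opp -supp_opp; apply: suppP_subsetUD1; rewrite suppN_opp.
Qed.

Section Flip.
Variables (R : realType) (d n : nat) (v : 'I_n -> 'I_d -> int).

Definition nontrivial_circuit_flip (Tp Tm : {set {set 'I_n}}) (h : 'I_n -> int) :=
  [/\ triangulation R v Tp, triangulation R v Tm, relation v h, circuit_flip Tp Tm h &
      exists F k j,
        [/\ separating Tp (supp h) (suppP h) F, k \in suppP h & j \in suppN h]].

Variables (Tp Tm : {set {set 'I_n}}) (h : 'I_n -> int).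
Hypothesis flipTpTm : nontrivial_circuit_flip Tp Tm h.
Implicit Types (S F G E : {set 'I_n}) (x : 'I_d -> int) (q : 'I_n -> R).

Local Notation I := (supp h).
Local Notation Ipos := (suppP h).
Local Notation Ineg := (suppN h).

Let triTp : triangulation R v Tp. Proof. by case: flipTpTm. Qed.
Let triTm : triangulation R v Tm. Proof. by case: flipTpTm. Qed.
Let rel_h : relation v h. Proof. by case: flipTpTm. Qed.
Let flip : circuit_flip Tp Tm h. Proof. by case: flipTpTm. Qed.

(* Otherwise h splits into two nonnegative representations of one point, in S
   and in the essential cone F :|: (I :\ k), k \in Ipos. *)
Lemma suppP_not_subset_cone S : S \in Tp -> ~~ (Ipos \subset S).
Proof.
move=> STp; apply/negP => PS.
case: flipTpTm => _ _ _ _ [F [k [_ [[_ sepF] kP _]]]].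
have hk0 : (h k)%:~R = 0 :> R.
  apply: (triangulation_relation_eq0 triTp STp (sepF k kP) (relation_lincomb R rel_h)) => i.
  - by rewrite ltr0z => hi; apply: (fintype.subsetP PS); rewrite inE.
  - by rewrite ltrz0 => hi; apply: (fintype.subsetP (suppN_subsetUD1 F kP)); rewrite inE.
by move: kP; rewrite inE -(ltr0z R) hk0 ltxx.
Qed.

Lemma separating_flip F : separating Tm I Ineg F <-> separating Tp I Ipos F.
Proof.
split=> [[dFI sepF] | [dFI sepF]]; last first.
  by split=> // j jN; apply/flip; right; exists F, j; split=> //; split.
have [j0 j0N] : exists j, j \in Ineg.
  by case: flipTpTm => _ _ _ _ [_ [_ [j [_ _ jN]]]]; exists j.
move/flip: (sepF j0 j0N) => [[STp _] | [F' [j [[dF'I sepF'] _ FF']]]].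
  by case/negP: (suppP_not_subset_cone STp); exact: suppP_subsetUD1.
by rewrite (setUD1_inj dFI dF'I FF'); split.
Qed.

Lemma circuit_flip_sym : circuit_flip Tm Tp (fun j => - h j).
Proof.
rewrite /circuit_flip supp_opp suppP_opp suppN_opp => S; split=> [STp | ].
  have [[F [k [sepF kP ->]]] | nessS] := pselect (essential Tp I Ipos S).
    by right; exists F, k; split => //; apply/separating_flip.
  left; split; first by apply/flip; left.
  move=> [F [j [_ jN SE]]]; case/negP: (suppP_not_subset_cone STp).
  by rewrite SE; exact: suppP_subsetUD1.
move=> [[STm nessS] | [F [k [/separating_flip sepF kP ->]]]]; last exact: sepF.2 k kP.
move/flip: STm => [[] // | [F [j [sepF jN SE]]]].
by case: nessS; exists F, j; split => //; apply/separating_flip.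
Qed.

Lemma nontrivial_circuit_flip_sym : nontrivial_circuit_flip Tm Tp (fun j => - h j).
Proof.
case: flipTpTm => _ _ _ _ [F [k [j [sepF kP jN]]]].
split; [exact: triTm | exact: triTp | exact: relation_opp | exact: circuit_flip_sym |].
by exists F, j, k; rewrite supp_opp suppP_opp suppN_opp; split => //; apply/separating_flip.
Qed.

Lemma essential_face_flip S G E : S \in Tp -> G \subset S ->
  essential Tm I Ineg E -> G \subset E -> exists2 E', essential Tp I Ipos E' & G \subset E'.
Proof.
move=> STp GS [F [j [/separating_flip sepF jN ->]]] GE.
have /fintype.subsetPn [k kP kG] : ~~ (Ipos \subset G).
  by apply: contraNN (suppP_not_subset_cone STp) => PG; exact: fintype.subset_trans PG GS.
exists (F :|: (I :\ k)); first by exists F, k.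
apply/fintype.subsetP => i iG; move: (fintype.subsetP GE i iG); rewrite !inE.
case/orP => [-> // | /andP[_ ->]]; rewrite andbT orbC; apply/orP; left.
by apply: contraNneq kG => <-.
Qed.

Lemma box_coeffs_flip S x q : S \in Tp -> box_coeffs v S x q ->
  ~ box_es R v Tp I Ipos x -> S \in Tm /\ ~ box_es R v Tm I Ineg x.
Proof.
move=> STp bq nes.
have qS : csupp q \subset S by case: bq => _ qS _; exact: csupp_subset qS.
have STm : S \in Tm.
  apply/flip; left; split=> // essS; apply: nes.
  by apply/(box_es_coeffsP _ _ triTp STp bq); exists S.
split=> // /(box_es_coeffsP _ _ triTm STm bq) [E essE qE]; apply: nes.
by apply/(box_es_coeffsP _ _ triTp STp bq); exact: essential_face_flip STp qS essE qE.
Qed.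

Lemma box_nonessential_flip x : box R v Tp x -> ~ box_es R v Tp I Ipos x ->
  box R v Tm x /\ ~ box_es R v Tm I Ineg x.
Proof.
move=> [S STp [q bq]] nes; have [STm nes'] := box_coeffs_flip STp bq nes.
by split=> //; exists S => //; exists q.
Qed.

Lemma nonessential_min_cone_flip x Fp Fm : box R v Tp x -> ~ box_es R v Tp I Ipos x ->
  min_cone R v Tp x Fp -> min_cone R v Tm x Fm -> Fp = Fm.
Proof.
move=> [S STp [q bq]] nes minp minm; have [STm _] := box_coeffs_flip STp bq nes.
rewrite -(min_cone_uniq (box_coeffs_min_cone triTp STp bq) minp).
by rewrite (min_cone_uniq (box_coeffs_min_cone triTm STm bq) minm).
Qed.

Lemma nonessential_box_rep_flip x (qp qm : 'I_n -> R) :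
  box R v Tp x -> ~ box_es R v Tp I Ipos x ->
  box_rep v Tp x qp -> box_rep v Tm x qm -> qp =1 qm.
Proof.
move=> [S STp [q bq]] nes rp rm j; have [STm _] := box_coeffs_flip STp bq nes.
by rewrite (box_rep_eq triTp STp bq rp) (box_rep_eq triTm STm bq rm).
Qed.

Lemma box_es_shift_flip x q t : box_es R v Tp I Ipos x -> box_rep v Tp x q ->
  calI h (yvec q) t ->
  exists x', box_es R v Tm I Ineg x' /\
    exists2 q' : 'I_n -> R, box_rep v Tm x' q' & forall j, yvec q j * t ^ h j = yvec q' j.
Proof.
move=> esx rq [_ [j jN qt1]]; have [_ [_ _ _ qx]] := rq.
have [F [k [sepF _ qF]]] := box_es_rep_vanish esx rq.
have hj : h j != 0 by move: jN; rewrite inE => /lt_eqF ->.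
have [s tE] := cis_surj (norm_eq1_cisXz hj qt1); subst t.
pose q' i := fracr (q i + s * (h i)%:~R).
have [x' q'x'] := lincomb_fracr_shift s rel_h qx.
have yq' i : yvec q i * cis s ^ h i = yvec q' i by rewrite !yvecE cis_fracr_shift.
have q'j : q' j = 0 by apply: cis_eq1; [exact: fracr_itv | rewrite -yvecE -yq'].
have [esx' rq'] := box_es_of_coeffs triTm ((separating_flip F).2 sepF) jN
  (And3 (fun=> fracr_itv _) (fracr_shift_vanish qF q'j) q'x').
by exists x'; split => //; exists q'.
Qed.

Lemma box_es_unshift_flip x' q' : box_es R v Tm I Ineg x' -> box_rep v Tm x' q' ->
  exists x, box_es R v Tp I Ipos x /\
    exists q : 'I_n -> R, box_rep v Tp x q /\
      exists2 t, calI h (yvec q) t & forall j, yvec q j * t ^ h j = yvec q' j.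
Proof.
move=> esx' rq'; have [_ [_ _ _ q'x']] := rq'.
have [F [j [/separating_flip sepF jN q'F]]] := box_es_rep_vanish esx' rq'.
have [k kP] : exists k, k \in Ipos.
  by case: flipTpTm => _ _ _ _ [_ [k [_ [_ kP _]]]]; exists k.
have hk : (h k)%:~R != 0 :> R by move: kP; rewrite inE intr_eq0 => /gt_eqF ->.
pose s := q' k / (h k)%:~R.
pose q i := fracr (q' i + - s * (h i)%:~R).
have [x qx] := lincomb_fracr_shift (- s) rel_h q'x'.
have qk : q k = 0 by rewrite /q /s mulNr mulfVK // subrr fracr0.
have [esx rq] := box_es_of_coeffs triTp sepF kP
  (And3 (fun=> fracr_itv _) (fracr_shift_vanish q'F qk) qx).
have yq i : yvec q i * cis s ^ h i = yvec q' i.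
  by rewrite !yvecE cis_fracr_shift -mulrA !cisX -cisD mulNr addNr cis0 mulr1.
have q'j : q' j = 0.
  by apply: q'F; apply: notin_setUD1 sepF.1 _; move: jN; rewrite !inE => /lt_eqF ->.
exists x; split => //; exists q; split => //; exists (cis s) => //.
by split; [exact: cis_neq0 | exists j => //; rewrite yq yvecE q'j cis0].
Qed.

End Flip.

Lemma relation_sum_eq0 d n (v : 'I_n -> 'I_d -> int) (hN : 'I_d -> int) (l : 'I_n -> int) :
  (forall j, \sum_(i < d) hN i * v j i = 1) -> relation v l -> \sum_(j < n) l j = 0.
Proof.
move=> hNv rel.
transitivity (\sum_(j < n) l j * \sum_(i < d) hN i * v j i).
  by under [RHS]eq_bigr do rewrite hNv mulr1.
under eq_bigr do rewrite big_distrr /=.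
rewrite exchange_big /=; apply: big1 => i _.
rewrite -[RHS](mulr0 (hN i)) -[in RHS](rel i) big_distrr /=.
by apply: eq_bigr => j _; ring.
Qed.

Lemma exists_suppP n (l : 'I_n -> int) :
  \sum_(j < n) l j = 0 -> supp l != finset.set0 -> exists k, k \in suppP l.
Proof.
move=> sum0 supp_neq0; have [P0 | [k kP]] := set_0Vmem (suppP l); last by exists k.
case/negP: supp_neq0; apply/eqP/setP => j; rewrite finset.in_set0.
have Nl_ge0 i : 0 <= - l i.
  have : i \notin suppP l by rewrite P0 finset.in_set0.
  by rewrite inE -leNgt oppr_ge0.
have Nl0 i : - l i = 0.
  by apply: (psumr_eq0P (P := predT) (fun i _ => Nl_ge0 i)); rewrite // sumrN sum0 oppr0.
by rewrite inE -oppr_eq0 Nl0 eqxx.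
Qed.

Lemma exists_suppN n (l : 'I_n -> int) :
  \sum_(j < n) l j = 0 -> supp l != finset.set0 -> exists j, j \in suppN l.
Proof.
move=> sum0 supp_neq0; rewrite -suppP_opp.
by apply: exists_suppP; [rewrite sumrN sum0 oppr0 | rewrite supp_opp].
Qed.

Lemma circuit_flip_id n (Tp Tm : {set {set 'I_n}}) (h : 'I_n -> int) :
  (forall F, ~ separating Tp (supp h) (suppP h) F) -> circuit_flip Tp Tm h -> Tm = Tp.
Proof.
move=> nosep flipTT; apply/setP => S; apply/idP/idP.
  by move/flipTT => [[] // | [F [j [/nosep]]]].
by move=> STp; apply/flipTT; left; split => // [[F [j [/nosep]]]].
Qed.

Lemma nontrivial_circuit_flip_of_edge (R : realType) d n (v : 'I_n -> 'I_d -> int)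
    (hN : 'I_d -> int) (Tp Tm : {set {set 'I_n}}) (h : 'I_n -> int) :
  (forall j, \sum_(i < d) hN i * v j i = 1) -> secondary_edge R v Tp Tm ->
  primitive_circuit_relation R v h -> circuit_flip Tp Tm h ->
  nontrivial_circuit_flip R v Tp Tm h.
Proof.
move=> hNv [[triTp _] [[triTm _] [gkz_neq _]]] [rel supp_neq0 _ _] flipTT.
have sum0 := relation_sum_eq0 hNv rel.
have [k kP] := exists_suppP sum0 supp_neq0.
have [j jN] := exists_suppN sum0 supp_neq0.
split => //; have [[F sepF] | nosep] := pselect (exists F, separating Tp (supp h) (suppP h) F).
  by exists F, k, j.
have nosep' F : ~ separating Tp (supp h) (suppP h) F by move=> sepF; apply: nosep; exists F.
by case: gkz_neq; rewrite (circuit_flip_id nosep' flipTT).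
Qed.

Theorem proposition4p4 (R : realType) (d n : nat) (v : 'I_n -> 'I_d -> int)
  (hN : 'I_d -> int) (Tp Tm : {set {set 'I_n}}) (h : 'I_n -> int) :
  injective v ->
  (forall x : 'I_d -> int, exists l : 'I_n -> int,
      forall i, x i = \sum_(j < n) l j * v j i) ->
  (forall j, \sum_(i < d) hN i * v j i = 1) ->
  secondary_edge R v Tp Tm ->
  primitive_circuit_relation R v h ->
  circuit_flip Tp Tm h ->
  (* (i) *)
  ((forall x : 'I_d -> int,
      (box R v Tp x /\ ~ box_es R v Tp (supp h) (suppP h) x) <->
      (box R v Tm x /\ ~ box_es R v Tm (supp h) (suppN h) x)) /\
   (forall x : 'I_d -> int,
      box R v Tp x -> ~ box_es R v Tp (supp h) (suppP h) x ->
      (forall Fp Fm, min_cone R v Tp x Fp -> min_cone R v Tm x Fm ->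
         Fp = Fm) /\
      (forall qp qm : 'I_n -> R, box_rep v Tp x qp -> box_rep v Tm x qm ->
         forall j, yvec qp j = yvec qm j))) /\
  (* (ii) *)
  ((forall x : 'I_d -> int, box_es R v Tp (supp h) (suppP h) x ->
      forall q : 'I_n -> R, box_rep v Tp x q ->
      forall t : R[i], calI h (yvec q) t ->
      exists x' : 'I_d -> int, box_es R v Tm (supp h) (suppN h) x' /\
        exists2 q' : 'I_n -> R, box_rep v Tm x' q' &
          forall j, yvec q j * t ^ h j = yvec q' j) /\
   (forall x' : 'I_d -> int, box_es R v Tm (supp h) (suppN h) x' ->
      forall q' : 'I_n -> R, box_rep v Tm x' q' ->
      exists x : 'I_d -> int, box_es R v Tp (supp h) (suppP h) x /\
        exists q : 'I_n -> R, box_rep v Tp x q /\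
          exists2 t : R[i], calI h (yvec q) t &
            forall j, yvec q j * t ^ h j = yvec q' j)).
Proof.
move=> _ _ hNv edge prim flipTT.
have flipTm := nontrivial_circuit_flip_of_edge hNv edge prim flipTT.
have flipTp := nontrivial_circuit_flip_sym flipTm.
split; split.
- move=> x; split=> [[bx nes] | [bx nes]]; first exact: (box_nonessential_flip flipTm bx nes).
  by move: (box_nonessential_flip flipTp bx); rewrite supp_opp suppP_opp suppN_opp; apply.
- move=> x bx nes; split=> [Fp Fm | qp qm rp rm j].
    exact: (nonessential_min_cone_flip flipTm bx nes).
  by rewrite !yvecE (nonessential_box_rep_flip flipTm bx nes rp rm).
- by move=> x esx q rq t tI; exact: (box_es_shift_flip flipTm esx rq tI).
- by move=> x' esx' q' rq'; exact: (box_es_unshift_flip flipTm esx' rq').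
Qed.
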